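(* Let $b,t>0$ and let $\omega_j,c_j$ ($j=1,\dots,s$) be complex numbers with $$\limsup_{n\to\infty} t^{-n}\Big|\sum_j c_j\omega_j^n\Big|\le b.$$ Then $\{1,\dots,s\}$ can be partitioned into disjoint sets $J_1,J_2$ such that $\sum_{j\in J_2}c_j\omega_j^n=0$ for all positive integers $n$, and $|\omega_j|\le t$ for each $j\in J_1$. *)

From HB Require Import structures.
From mathcomp Require Import all_boot all_order all_algebra.
From mathcomp Require Import all_classical all_reals all_analysis.
From mathcomp Require Import complex.

From HB Require Import structures.
From mathcomp Require Import all_boot all_order all_algebra.
From mathcomp Require Import all_classical all_reals all_analysis.
From mathcomp Require Import complex ring.
Set Implicit Arguments.
Unset Strict Implicit.
Unset Printing Implicit Defensive.

Import Order.TTheory GRing.Theory Num.Theory.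
Local Open Scope ring_scope.
Local Open Scope complex_scope.

(* Let [u n = \sum_j c j * w j ^+ n] and fix a frequency [a] with [|a| > t].
   Applying to [u] the difference operator with characteristic polynomial
   [P = \prod_(w j != a) ('X - w j)] kills every other frequency and leaves
   [C * P.[a] * a ^+ n], where [C] is the sum of the [c j] with [w j = a].
   The bound [|u n| = O(t ^+ n)] passes to this sequence, which grows like
   [|a| ^+ n]; hence [C = 0].  The frequencies of modulus [> t] thus carry
   vanishing total weight, so their part of [u] vanishes identically. *)

Definition power_sum {R : pzSemiRingType} {I : finType} (c w : I -> R) (n : nat) : R :=
  \sum_(j : I) c j * w j ^+ n.

Section Asymptotics.
Variable R : realType.
Local Open Scope classical_set_scope.

Lemma limn_esup_lt_near (u : (\bar R)^nat) (l : \bar R) :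
  (limn_esup u < l)%E -> \forall n \near \oo, (u n < l)%E.
Proof.
rewrite /limn_esup /limf_esup => /ereal_inf_lt[_ [V eventually_V <-]] supVl.
apply: filterS eventually_V => n Vn; apply: le_lt_trans supVl.
by apply: ereal_sup_ubound; exists n.
Qed.

Lemma geometric_domination_le0 (d K x y : R) (N : nat) :
  0 <= y < x -> (forall n, (N <= n)%N -> d * x ^+ n <= K * y ^+ n) -> d <= 0.
Proof.
move=> /andP[y_ge0 ltyx] dom; have x_gt0 : 0 < x by apply: le_lt_trans ltyx.
have ratio_lt1 : `|y / x| < 1.
  by rewrite ger0_norm ?divr_ge0 ?(ltW x_gt0) // ltr_pdivrMr // mul1r.
have cvgK : (K * (y / x) ^+ n) @[n --> \oo] --> 0.
  by rewrite -(mulr0 K); apply: cvgMr; exact: cvg_expr.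
apply: (closed_cvg _ (@closed_ge _ d) _ _ cvgK).
exists N => // n /= /dom; rewrite expr_div_n mulrA ler_pdivlMr ?exprn_gt0 //.
Qed.

End Asymptotics.

Section ClassSums.
Variables (I : finType) (T : eqType) (V : pzSemiRingType).
Variables (w : I -> T) (c : I -> V).

Lemma big_class_closed_eq0 (f : T -> V) (S : {set I}) :
    (forall i j, j \in S -> w i = w j -> i \in S) ->
    {in S, forall j, \sum_(i | w i == w j) c i = 0} ->
  \sum_(j in S) c j * f (w j) = 0.
Proof.
move=> S_closed class_eq0; pose cls j := [set i | w i == w j].
rewrite (partition_big_imset cls) /=; apply: big1 => _ /imsetP[j jS ->].
have same_cls i : (i \in S) && (cls i == cls j) = (w i == w j).
  apply/andP/eqP => [[_ /eqP eq_cls] | eq_ij].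
    have : i \in cls i by rewrite inE.
    by rewrite eq_cls inE => /eqP.
  by split; [exact: S_closed jS eq_ij | apply/eqP/setP => k; rewrite !inE eq_ij].
rewrite (eq_bigl _ _ same_cls).
transitivity ((\sum_(i | w i == w j) c i) * f (w j)); last by rewrite class_eq0 ?mul0r.
by rewrite mulr_suml; apply: eq_bigr => i /eqP ->.
Qed.

End ClassSums.

Section Annihilator.
Variables (R : idomainType) (I : finType) (c w : I -> R).

Lemma power_sum_shift_poly (P : {poly R}) n :
  \sum_(k < size P) P`_k * power_sum c w (n + k) =
  \sum_j c j * w j ^+ n * P.[w j].
Proof.
rewrite /power_sum; under eq_bigr do rewrite mulr_sumr.
rewrite exchange_big /=; apply: eq_bigr => j _.
rewrite horner_coef mulr_sumr; apply: eq_bigr => k _; rewrite exprD; ring.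
Qed.

Lemma power_sum_isolate (a : R) : exists2 P : {poly R}, P.[a] != 0 &
  forall n, \sum_(k < size P) P`_k * power_sum c w (n + k) =
            (\sum_(j | w j == a) c j) * P.[a] * a ^+ n.
Proof.
pose P := \prod_(j | w j != a) ('X - (w j)%:P); exists P => [|n].
  rewrite horner_prod; apply/prodf_neq0 => j.
  by rewrite hornerXsubC subr_eq0 eq_sym.
rewrite power_sum_shift_poly (bigID (fun j => w j == a)) /=.
rewrite [X in _ + X]big1 ?addr0 => [|j wja]; last first.
  by rewrite horner_prod (bigD1 j) //= hornerXsubC subrr mul0r mulr0.
rewrite !mulr_suml; apply: eq_bigr => j /eqP ->; ring.
Qed.

End Annihilator.

Section ComplexNorm.
Variable R : rcfType.
Local Notation normc := (@ComplexField.Normc.normc R).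

Lemma normc_ge0 (z : R[i]) : 0 <= normc z.
Proof. by case: z => a b; exact: sqrtr_ge0. Qed.

Lemma normc_gt0 (z : R[i]) : (0 < normc z) = (z != 0).
Proof.
rewrite lt_def normc_ge0 andbT; congr negb; apply/eqP/eqP.
  exact: ComplexField.Normc.eq0_normc.
by move->; exact: ComplexField.Normc.normc0.
Qed.

Lemma normcX (z : R[i]) n : normc (z ^+ n) = normc z ^+ n.
Proof.
elim: n => [|n IHn]; first by rewrite !expr0 ComplexField.Normc.normc1.
by rewrite !exprS ComplexField.Normc.normcM IHn.
Qed.

Lemma normc_sum (J : finType) (F : J -> R[i]) :
  normc (\sum_j F j) <= \sum_j normc (F j).
Proof.
elim/big_rec2: _ => [|j y z _ IH]; first by rewrite ComplexField.Normc.normc0.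
by apply: le_trans (le_normcD _ _) _; rewrite lerD2l.
Qed.

End ComplexNorm.

Section LargeFrequencies.
Variables (R : realType) (I : finType) (c w : I -> R[i]) (t B : R) (N : nat).
Local Notation normc := (@ComplexField.Normc.normc R).
Hypotheses (t_gt0 : 0 < t)
  (bounded : forall n, (N <= n)%N -> normc (power_sum c w n) <= B * t ^+ n).

Lemma class_sum_large_eq0 (a : R[i]) :
  t < normc a -> \sum_(j | w j == a) c j = 0.
Proof.
move=> lt_ta; have [P Pa_neq0 isolate] := power_sum_isolate c w a.
set C := \sum_(j | w j == a) c j in isolate *.
pose K := B * \sum_(k < size P) normc P`_k * t ^+ k.
have dom n : (N <= n)%N -> normc (C * P.[a]) * normc a ^+ n <= K * t ^+ n.
  move=> le_Nn; rewrite -normcX -ComplexField.Normc.normcM -isolate.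
  apply: le_trans (normc_sum _) _.
  rewrite /K mulr_sumr mulr_suml; apply: ler_sum => k _.
  have le_Nnk : (N <= n + k)%N by rewrite (leq_trans le_Nn) ?leq_addr.
  rewrite ComplexField.Normc.normcM (_ : _ * _ * _ = normc P`_k * (B * t ^+ (n + k))).
    by rewrite ler_wpM2l ?normc_ge0 ?bounded.
  by rewrite mulrCA -!mulrA -exprD addnC.
have t_range : 0 <= t < normc a by rewrite (ltW t_gt0) lt_ta.
have := geometric_domination_le0 t_range dom.
by rewrite leNgt normc_gt0 negbK mulf_eq0 (negPf Pa_neq0) orbF => /eqP.
Qed.

End LargeFrequencies.

Theorem lemma12p7 (R : realType) (s : nat) (b t : R)
  (w c : 'I_s -> R[i]) (hb : 0 < b) (ht : 0 < t)
  (hlim : (limn_esup (fun n : nat =>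
      ((t ^- n * ComplexField.Normc.normc (\sum_(j < s) c j * w j ^+ n))%:E)) <= b%:E)%E) :
  exists J1 J2 : {set 'I_s},
    [/\ [disjoint J1 & J2], J1 :|: J2 = [set: 'I_s],
        (forall n : nat, (0 < n)%N -> \sum_(j in J2) c j * w j ^+ n = 0)
      & (forall j, j \in J1 -> ComplexField.Normc.normc (w j) <= t)].
Proof.
have lt_b : (b%:E < (b + 1)%:E)%E by rewrite lte_fin ltrDl.
have [N _ bounded] := limn_esup_lt_near (le_lt_trans hlim lt_b).
set J2 := [set j | t < ComplexField.Normc.normc (w j)].
exists (~: J2), J2; split.
- by rewrite finset.disjoints_subset.
- by rewrite finset.setUC finset.setUCr.
- move=> n _; apply: (big_class_closed_eq0 (fun z => z ^+ n)) => [i j|j].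
    by rewrite !inE => ? ->.
  rewrite inE; apply: (class_sum_large_eq0 (B := b + 1) (N := N)) => // m le_Nm.
  have := bounded m le_Nm; rewrite /= lte_fin ltr_pdivrMl ?exprn_gt0 //.
  by rewrite mulrC => /ltW.
- by move=> j; rewrite !inE -leNgt.
Qed.
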